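(* Let $R$ be a commutative ring and $E$ a set of $w\ge3$ distinct non-trivial idempotents of $R$ such that $eR$ is a maximal ideal of $R$ for every $e\in E$. Let $x=f_1f_2\cdots f_k$ and $y=b_1b_2\cdots b_j$ with $f_1,\dots,f_k,b_1,\dots,b_j\in E$ and $2\le k,j<w$. Then (1) $x\ne0$; (2) $x=y$ if and only if $\{f_1,\dots,f_k\}=\{b_1,\dots,b_j\}$.
   Context: Rings have $1\ne0$. An idempotent $e$ ($e^2=e$) is non-trivial if $e\ne0,1$. *)

From HB Require Import structures.
From mathcomp Require Import all_boot all_order all_algebra.
Set Implicit Arguments. Unset Strict Implicit. Unset Printing Implicit Defensive.
Import GRing.Theory.
Local Open Scope ring_scope.

Definition is_ideal (R : comNzRingType) (I : R -> Prop) : Prop :=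
  [/\ I 0, (forall a b, I a -> I b -> I (a + b)) & (forall r a, I a -> I (r * a))].

Definition maximal_ideal (R : comNzRingType) (I : R -> Prop) : Prop :=
  [/\ is_ideal I, ~ I 1 &
     forall J : R -> Prop, is_ideal J -> (forall a, I a -> J a) ->
       (forall a, J a -> I a) \/ (forall a, J a)].

Definition principal_ideal (R : comNzRingType) (e : R) : R -> Prop :=
  fun a => exists r, a = e * r.

Definition nontriv_idem (R : comNzRingType) (e : R) : Prop :=
  [/\ e * e = e, e <> 0 & e <> 1].

From mathcomp Require Import all_boot all_order all_algebra.
From mathcomp Require Import ring.
Set Implicit Arguments. Unset Strict Implicit. Unset Printing Implicit Defensive.
Import GRing.Theory.
Local Open Scope ring_scope.

(* Two distinct idempotents e, g of E generate distinct maximal ideals, hence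
   comaximal ones, and eR + gR = R forces (1 - e)(1 - g) = 0, i.e.
   (1 - e) g = 1 - e.  Multiplying a product x of elements of E by 1 - e
   therefore gives 0 when e is a factor of x and 1 - e <> 0 otherwise, so x
   determines its set of factors.  Since fewer than |E| elements occur in x,
   some e in E is not a factor, whence x <> 0.  Conversely a product of
   idempotents depends only on the set of its factors. *)

Lemma idem_principal_ideal_eq (R : comNzRingType) (e g : R) :
  e * e = e -> g * g = g ->
  principal_ideal e g -> principal_ideal g e -> e = g.
Proof.
move=> ee gg [r g_er] [s e_gs].
have eg : e * g = g by rewrite g_er mulrA ee.
have ge : g * e = e by rewrite e_gs mulrA gg.
by rewrite -ge mulrC eg.
Qed.

Lemma maximal_principal_ideals_comaximal (R : comNzRingType) (e g : R) :
  e * e = e -> g * g = g ->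
  maximal_ideal (principal_ideal e) -> maximal_ideal (principal_ideal g) ->
  e != g -> exists r s, 1 = e * r + g * s.
Proof.
move=> ee gg [eR_ideal eR_proper eR_max] [_ _ gR_max] neq_eg.
pose J a := exists r s, a = e * r + g * s.
have J_ideal : is_ideal J.
  split; first by exists 0, 0; rewrite !mulr0 addr0.
  - by move=> _ _ [r [s ->]] [r' [s' ->]]; exists (r + r'), (s + s'); ring.
  - by move=> t _ [r [s ->]]; exists (t * r), (t * s); ring.
have eR_J : forall a, principal_ideal e a -> J a.
  by move=> _ [r ->]; exists r, 0; rewrite mulr0 addr0.
case: (eR_max J J_ideal eR_J) => [J_eR | J_all]; last exact: J_all 1.
have [r g_er] : principal_ideal e g.
  by apply: J_eR; exists 0, 1; rewrite mulr0 mulr1 add0r.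
have gR_eR : forall a, principal_ideal g a -> principal_ideal e a.
  by move=> _ [t ->]; exists (r * t); rewrite g_er mulrA.
case: (gR_max _ eR_ideal gR_eR) => [eR_gR | eR_all]; last first.
  by case: eR_proper; exact: eR_all.
have e_gR : principal_ideal g e by apply: eR_gR; exists 1; rewrite mulr1.
have g_eR : principal_ideal e g by exists r.
by rewrite (idem_principal_ideal_eq ee gg g_eR e_gR) eqxx in neq_eg.
Qed.

Lemma comaximal_idem_compl_mul (R : comNzRingType) (e g r s : R) :
  e * e = e -> g * g = g -> 1 = e * r + g * s -> (1 - e) * (1 - g) = 0.
Proof.
move=> ee gg one_eq.
have -> : (1 - e) * (1 - g) = (1 - e) * (1 - g) * (e * r + g * s).
  by rewrite -one_eq mulr1.
have -> : (1 - e) * (1 - g) * (e * r + g * s)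
    = (e - e * e) * ((1 - g) * r) + (g - g * g) * ((1 - e) * s) by ring.
by rewrite ee gg !subrr !mul0r addr0.
Qed.

Lemma idem_compl_mul_prod_mem (R : comNzRingType) (s : seq R) (e : R) :
  e * e = e -> e \in s -> (1 - e) * \prod_(x <- s) x = 0.
Proof.
by move=> ee es; rewrite (big_rem e es) /= mulrA mulrBl mul1r ee subrr mul0r.
Qed.

Lemma prod_idem_undup (R : comNzRingType) (s : seq R) :
  {in s, forall e, e * e = e} -> \prod_(x <- s) x = \prod_(x <- undup s) x.
Proof.
elim: s => [|e s IH] s_idem //=.
have s_idem' : {in s, forall e, e * e = e}.
  by move=> x xs; apply: s_idem; rewrite inE xs orbT.
case: ifP => es; last by rewrite !big_cons IH.
by rewrite -IH // big_cons (big_rem e es) /= mulrA s_idem ?mem_head.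
Qed.

Lemma eq_prod_idem (R : comNzRingType) (s t : seq R) :
  {in s, forall e, e * e = e} -> {in t, forall e, e * e = e} ->
  s =i t -> \prod_(x <- s) x = \prod_(x <- t) x.
Proof.
move=> s_idem t_idem eq_st.
rewrite (prod_idem_undup s_idem) (prod_idem_undup t_idem).
apply/perm_big/uniq_perm; rewrite ?undup_uniq // => x.
by rewrite !mem_undup eq_st.
Qed.

Lemma prod_codom (R : comNzRingType) (T : finType) (f : T -> R) :
  \prod_(i : T) f i = \prod_(x <- codom f) x.
Proof. by rewrite big_image. Qed.

Section IdempotentsGeneratingMaximalIdeals.

Variables (R : comNzRingType) (E : seq R).
Hypothesis E_idem : forall e, e \in E -> nontriv_idem e.
Hypothesis E_max : forall e, e \in E -> maximal_ideal (principal_ideal e).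

Lemma compl_mul_neq (e g : R) :
  e \in E -> g \in E -> e != g -> (1 - e) * g = 1 - e.
Proof.
move=> eE gE neq_eg.
have [ee _ _] := E_idem eE; have [gg _ _] := E_idem gE.
have [r [s one_eq]] :=
  maximal_principal_ideals_comaximal ee gg (E_max eE) (E_max gE) neq_eg.
have := comaximal_idem_compl_mul ee gg one_eq.
by rewrite mulrBr mulr1 => /eqP; rewrite subr_eq0 => /eqP.
Qed.

Lemma compl_mul_prod_notin (e : R) (s : seq R) :
  e \in E -> {subset s <= E} -> e \notin s ->
  (1 - e) * \prod_(x <- s) x = 1 - e.
Proof.
move=> eE; elim: s => [|g s IH] sE; first by rewrite big_nil mulr1.
rewrite inE negb_or => /andP [neq_eg es].
have gE : g \in E by apply: sE; exact: mem_head.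
rewrite big_cons mulrA compl_mul_neq // IH // => x xs.
by apply: sE; rewrite inE xs orbT.
Qed.

Lemma compl_neq0 (e : R) : e \in E -> 1 - e != 0.
Proof. by move=> eE; rewrite subr_eq0 eq_sym; have [_ _ /eqP] := E_idem eE. Qed.

Lemma prod_neq0 (s : seq R) :
  uniq E -> {subset s <= E} -> (size s < size E)%N -> \prod_(x <- s) x != 0.
Proof.
move=> E_uniq sE small_s.
have /allPn [e eE es] : ~~ all (mem s) E.
  by apply: contraTN small_s => /allP/(uniq_leq_size E_uniq); rewrite leqNgt.
apply: contra_neq (compl_neq0 eE) => prod0.
by rewrite -(compl_mul_prod_notin eE sE es) prod0 mulr0.
Qed.

Lemma eq_prod_sub (s t : seq R) :
  {subset s <= E} -> {subset t <= E} ->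
  \prod_(x <- s) x = \prod_(x <- t) x -> {subset s <= t}.
Proof.
move=> sE tE eq_prod e es; have eE := sE e es.
apply: contraTT (compl_neq0 eE) => et; rewrite negbK; apply/eqP.
have [ee _ _] := E_idem eE.
by rewrite -(compl_mul_prod_notin eE tE et) -eq_prod idem_compl_mul_prod_mem.
Qed.

End IdempotentsGeneratingMaximalIdeals.

Theorem lemma3p20 (R : comNzRingType) (E : seq R)
  (hE_uniq : uniq E) (hw : (3 <= size E)%N)
  (hE_idem : forall e, e \in E -> nontriv_idem e)
  (hE_max : forall e, e \in E -> maximal_ideal (principal_ideal e))
  (k j : nat) (f : 'I_k -> R) (b : 'I_j -> R)
  (hf : forall i, f i \in E) (hb : forall i, b i \in E)
  (hk : (2 <= k < size E)%N) (hj : (2 <= j < size E)%N) :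
  (\prod_(i < k) f i != 0) /\
  (\prod_(i < k) f i = \prod_(i < j) b i <-> codom f =i codom b).
Proof.
have f_E : {subset codom f <= E} by move=> _ /codomP [i ->].
have b_E : {subset codom b <= E} by move=> _ /codomP [i ->].
have E_idem : {in E, forall e, e * e = e} by move=> e /hE_idem [].
rewrite !prod_codom; split.
  apply: (prod_neq0 hE_idem hE_max hE_uniq f_E).
  by rewrite size_codom card_ord; case/andP: hk.
split=> [eq_prod x | eq_codom].
  by apply/idP/idP; apply: (eq_prod_sub hE_idem hE_max) => //; rewrite eq_prod.
apply: eq_prod_idem eq_codom.
- by move=> e /f_E/E_idem.
- by move=> e /b_E/E_idem.
Qed.
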